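(* Let $1<n\le d$. Let $\mathrm{Stationary}:(\mathbb{R}^d)^{n+1}\to\{\mathsf{true},\mathsf{false}\}$ be a first-order stationarity condition that is necessary, i.e. for every smooth preference function $f_0:\mathbb{R}^d\to\mathbb{R}$, every collection of smooth strongly convex objectives $f_1,\dots,f_n:\mathbb{R}^d\to\mathbb{R}$, and every $x$ that is preference optimal for $(f_0,f_1,\dots,f_n)$, one has $\mathrm{Stationary}(\nabla f_0(x),\nabla f_1(x),\dots,\nabla f_n(x))=\mathsf{true}$. Then $\mathrm{Stationary}$ is trivial in the following sense: for any preference generic set of vectors $v_0,\dots,v_n\in\mathbb{R}^d$, $\mathrm{Stationary}(v_0,\dots,v_n)=\mathsf{true}$.
   Context: $\Delta^{n-1}$ is the simplex of convex weights in $\mathbb{R}^n$. For objectives $F=(f_1,\dots,f_n)$, a point $x$ is Pareto optimal if for all $x'$, $f_i(x')<f_i(x)$ for some $i$ implies $f_j(x')>f_j(x)$ for some $j$; $\mathrm{Pareto}(F)$ denotes the set of Pareto optimal points. A point $x\in\mathrm{Pareto}(F)$ is preference optimal (for preference $f_0$) if $f_0(x)\le f_0(x')$ for all $x'\in\mathrm{Pareto}(F)$. A set $\{v_0,v_1,\dots,v_n\}\subset\mathbb{R}^d$ with $1<n\le d$ is preference generic if there is a unique $\beta\in\Delta^{n-1}$ with $\beta_1v_1+\dots+\beta_nv_n=0$, and $v_0\notin\mathrm{span}(v_1,\dots,v_n)$. *)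

From HB Require Import structures.
From mathcomp Require Import all_boot all_order all_algebra.
From mathcomp Require Import all_classical all_reals all_analysis.
Set Implicit Arguments. Unset Strict Implicit. Unset Printing Implicit Defensive.
Import Order.TTheory GRing.Theory Num.Theory.
Import numFieldNormedType.Exports.
Local Open Scope ring_scope.

Section Defs.
Variables (R : realType) (d : nat).
Local Notation V := 'rV[R]_d.

Fixpoint Ck (k : nat) (f : V -> R) : Prop :=
  match k with
  | 0 => continuous f
  | k'.+1 => (forall x, differentiable f x) /\ (forall u : V, Ck k' (fun x => derive f x u))
  end.

Definition smooth (f : V -> R) : Prop := forall k, Ck k f.

Definition sqnorm (u : V) : R := \sum_(i < d) u ord0 i ^+ 2.

Definition strongly_convex (f : V -> R) : Prop :=
  exists m : R, 0 < m /\
    forall (x y : V) (t : R), 0 <= t -> t <= 1 ->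
      f (t *: x + (1 - t) *: y)
        <= t * f x + (1 - t) * f y - m / 2 * t * (1 - t) * sqnorm (x - y).

Definition grad (f : V -> R) (x : V) : V :=
  \row_(i < d) derive f x (delta_mx ord0 i : V).

Variable n : nat.

Definition pareto_optimal (f : 'I_n -> V -> R) (x : V) : Prop :=
  forall x' : V, (exists i, f i x' < f i x) -> exists j, f j x' > f j x.

Definition preference_optimal (f0 : V -> R) (f : 'I_n -> V -> R) (x : V) : Prop :=
  pareto_optimal f x /\ forall x', pareto_optimal f x' -> f0 x <= f0 x'.

Definition in_simplex (b : 'I_n -> R) : Prop :=
  (forall i, 0 <= b i) /\ \sum_(i < n) b i = 1.

Definition preference_generic (v0 : V) (v : 'I_n -> V) : Prop :=
  (exists b, in_simplex b /\ \sum_(i < n) b i *: v i = 0 /\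
     forall b', in_simplex b' -> \sum_(i < n) b' i *: v i = 0 -> forall i, b' i = b i)
  /\ ~ (exists c : 'I_n -> R, v0 = \sum_(i < n) c i *: v i).

End Defs.

(* Since v0 is not in the span of the v_i, there is a vector a orthogonal to
   every v_i with c := <a, p> > 0, where p := v0 - a.  Take f0 x := <v0, x> and
   f_i x := <v_i, x> + |x|^2 / 2 + <p, x>^2 / (2 c): these are polynomial, hence
   smooth, strongly convex, and their gradients at 0 are v0 and v_i.  The point
   0 is Pareto optimal, because for the simplex weights b with sum_i b_i v_i = 0
   the combination sum_i b_i f_i is a positive definite quadratic form.  It is
   preference optimal, because moving by t a changes every f_i by the same
   amount t <v0, x> + t^2 / 2 <a, v0>: at a point x with <v0, x> < 0 a small
   step along a decreases all objectives at once, so x is not Pareto optimal. *)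

From HB Require Import structures.
From mathcomp Require Import all_boot all_order all_algebra.
From mathcomp Require Import all_classical all_reals all_analysis.
From mathcomp Require Import ring.
Set Implicit Arguments. Unset Strict Implicit. Unset Printing Implicit Defensive.
Import Order.TTheory GRing.Theory Num.Theory.
Import numFieldNormedType.Exports.
Local Open Scope ring_scope.

Section PolynomialFunctions.
Variables (R : realType) (d : nat).
Local Notation V := 'rV[R]_d.

Inductive polyfun : (V -> R) -> Prop :=
| polyfun_cst c : polyfun (fun _ => c)
| polyfun_coord k : polyfun (fun x => x ord0 k)
| polyfun_add f g : polyfun f -> polyfun g -> polyfun (fun x => f x + g x)
| polyfun_mul f g : polyfun f -> polyfun g -> polyfun (fun x => f x * g x).

Lemma polyfun_eq f g : polyfun f -> f =1 g -> polyfun g.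
Proof. by move=> pf /funext <-. Qed.

Lemma polyfun_sum (I : Type) (s : seq I) (F : I -> V -> R) :
  (forall i, polyfun (F i)) -> polyfun (fun x => \sum_(i <- s) F i x).
Proof.
move=> pF; elim: s => [|i s IH].
  by apply: polyfun_eq (polyfun_cst 0) _ => x; rewrite big_nil.
by apply: polyfun_eq (polyfun_add (pF i) IH) _ => x; rewrite big_cons.
Qed.

Lemma polyfun_differentiable f x : polyfun f -> differentiable f x.
Proof.
elim=> [c|k|{}f g _ df _ dg|{}f g _ df _ dg].
- exact: differentiable_cst.
- exact: differentiable_coord.
- exact: differentiableD.
- exact: differentiableM.
Qed.

Lemma polyfun_derivable f x u : polyfun f -> derivable f x u.
Proof. by move=> /(polyfun_differentiable x)/diff_derivable. Qed.

Lemma derive_cst_fun (c : R) (x u : V) : derive (fun _ : V => c) x u = 0.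
Proof. exact: derive_cst. Qed.

Lemma derive_coord (x u : V) k : derive (fun y : V => y ord0 k) x u = u ord0 k.
Proof.
have /matrixP/(_ ord0 k) := derive_mx (@derivable_id _ _ x u).
by rewrite derive_id mxE.
Qed.

Lemma derive_polyfunD f g x u : polyfun f -> polyfun g ->
  derive (fun y => f y + g y) x u = derive f x u + derive g x u.
Proof. by move=> pf pg; apply: deriveD; apply: polyfun_derivable. Qed.

Lemma derive_polyfunM f g x u : polyfun f -> polyfun g ->
  derive (fun y => f y * g y) x u = f x * derive g x u + g x * derive f x u.
Proof. by move=> pf pg; apply: deriveM; apply: polyfun_derivable. Qed.

Lemma derive_polyfun_sum (I : Type) (s : seq I) (F : I -> V -> R) x u :
  (forall i, polyfun (F i)) ->
  derive (fun y => \sum_(i <- s) F i y) x u = \sum_(i <- s) derive (F i) x u.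
Proof.
move=> pF; elim: s => [|i s IH].
  have -> : (fun y => \sum_(j <- [::]) F j y) = fun _ => 0.
    by apply/funext => y; rewrite big_nil.
  by rewrite big_nil derive_cst_fun.
have -> : (fun y => \sum_(j <- i :: s) F j y) = fun y => F i y + \sum_(j <- s) F j y.
  by apply/funext => y; rewrite big_cons.
by rewrite derive_polyfunD ?IH ?big_cons //; exact: polyfun_sum.
Qed.

Lemma polyfun_derive f u : polyfun f -> polyfun (fun x => derive f x u).
Proof.
elim=> [c|k|{}f g pf Df pg Dg|{}f g pf Df pg Dg].
- by apply: polyfun_eq (polyfun_cst 0) _ => x; rewrite derive_cst_fun.
- by apply: polyfun_eq (polyfun_cst (u ord0 k)) _ => x; rewrite derive_coord.
- by apply: polyfun_eq (polyfun_add Df Dg) _ => x; rewrite derive_polyfunD.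
- apply: polyfun_eq (polyfun_add (polyfun_mul pf Dg) (polyfun_mul pg Df)) _ => x.
  by rewrite derive_polyfunM.
Qed.

Lemma polyfun_smooth f : polyfun f -> smooth f.
Proof.
move=> pf k; elim: k f pf => [|k IH] f pf /=.
  by move=> x; apply/differentiable_continuous/polyfun_differentiable.
by split=> [x|u]; [exact: polyfun_differentiable | exact/IH/polyfun_derive].
Qed.

End PolynomialFunctions.

Arguments polyfun_cst {R d}.
Arguments polyfun_coord {R d}.

Section DotProduct.
Variables (R : realType) (d : nat).
Local Notation V := 'rV[R]_d.

Definition dot (x y : V) : R := \sum_(k < d) x ord0 k * y ord0 k.

Lemma dotC x y : dot x y = dot y x.
Proof. by apply: eq_bigr => k _; rewrite mulrC. Qed.

Lemma dotDr x y z : dot x (y + z) = dot x y + dot x z.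
Proof. by rewrite /dot -big_split; apply: eq_bigr => k _; rewrite mxE mulrDr. Qed.

Lemma dotZr x a y : dot x (a *: y) = a * dot x y.
Proof. by rewrite /dot mulr_sumr; apply: eq_bigr => k _; rewrite mxE mulrCA. Qed.

Lemma dotDl x y z : dot (x + y) z = dot x z + dot y z.
Proof. by rewrite dotC dotDr !(dotC z). Qed.

Lemma dotZl a x y : dot (a *: x) y = a * dot x y.
Proof. by rewrite dotC dotZr dotC. Qed.

Lemma dotNl x y : dot (- x) y = - dot x y.
Proof. by rewrite -scaleN1r dotZl mulN1r. Qed.

Lemma dotBl x y z : dot (x - y) z = dot x z - dot y z.
Proof. by rewrite dotDl dotNl. Qed.

Lemma dot0r x : dot x 0 = 0.
Proof. by rewrite -(scale0r 0) dotZr mul0r. Qed.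

Lemma dot0l x : dot 0 x = 0.
Proof. by rewrite dotC dot0r. Qed.

Lemma dot_suml n (b : 'I_n -> R) (v : 'I_n -> V) x :
  dot (\sum_(i < n) b i *: v i) x = \sum_(i < n) b i * dot (v i) x.
Proof.
rewrite (big_morph (dot^~ x) (fun y z => dotDl y z x) (dot0l x)).
by apply: eq_bigr => i _; rewrite dotZl.
Qed.

Lemma sqnorm_dot x : sqnorm x = dot x x.
Proof. by apply: eq_bigr => k _; rewrite expr2. Qed.

Lemma dot_delta x k : dot x (delta_mx ord0 k) = x ord0 k.
Proof.
rewrite /dot (bigD1 k) //= big1 ?addr0; first by rewrite mxE !eqxx mulr1.
by move=> j /negbTE jk; rewrite mxE jk andbF mulr0.
Qed.

Lemma sqnorm_ge0 (x : V) : 0 <= sqnorm x.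
Proof. by apply: sumr_ge0 => k _; rewrite sqr_ge0. Qed.

Lemma sqnorm_gt0 (x : V) : x != 0 -> 0 < sqnorm x.
Proof.
move=> x_neq0; rewrite lt0r sqnorm_ge0 andbT; apply: contra x_neq0.
rewrite psumr_eq0 => [/allP x_eq0|k _]; last exact: sqr_ge0.
apply/eqP/rowP => k; rewrite mxE.
by apply/eqP; rewrite -sqrf_eq0; exact: x_eq0 (mem_index_enum _).
Qed.

Lemma polyfun_dotl a : polyfun (dot a).
Proof.
by apply: polyfun_sum => k; apply: polyfun_mul; [apply: polyfun_cst|apply: polyfun_coord].
Qed.

Lemma derive_dotl a x u : derive (dot a) x u = dot a u.
Proof.
rewrite derive_polyfun_sum => [|k]; last first.
  by apply: polyfun_mul; [apply: polyfun_cst|apply: polyfun_coord].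
apply: eq_bigr => k _.
by rewrite derive_polyfunM ?derive_coord ?derive_cst_fun ?mulr0 ?addr0 //;
  [apply: polyfun_cst|apply: polyfun_coord].
Qed.

Lemma grad_dotl a x : grad (dot a) x = a.
Proof. by apply/rowP => k; rewrite mxE derive_dotl dot_delta. Qed.

Lemma polyfun_sqnorm : polyfun (@sqnorm R d).
Proof. by apply: polyfun_sum => k; apply: polyfun_mul; apply: polyfun_coord. Qed.

Lemma derive_sqnorm x u : derive (@sqnorm R d) x u = 2 * dot x u.
Proof.
rewrite derive_polyfun_sum => [|k]; last by apply: polyfun_mul; apply: polyfun_coord.
rewrite mulr_sumr; apply: eq_bigr => k _.
by rewrite derive_polyfunM ?derive_coord; [ring|apply: polyfun_coord..].
Qed.

Lemma notin_span_orthogonal n (v0 : V) (v : 'I_n -> V) :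
  ~ (exists c : 'I_n -> R, v0 = \sum_(i < n) c i *: v i) ->
  exists w : V, (forall i, dot (v i) w = 0) /\ dot v0 w != 0.
Proof.
move=> v0_notin_span.
pose S : 'M[R]_(n, d) := \matrix_(i < n, k < d) v i ord0 k.
have : ~~ (v0 <= S)%MS.
  apply/negP => /submxP [D v0E]; apply: v0_notin_span; exists (fun i => D ord0 i).
  rewrite v0E mulmx_sum_row; apply: eq_bigr => i _; congr (_ *: _).
  by apply/rowP => k; rewrite !mxE.
rewrite submxE => /eqP/matrixP/boolp.existsNP [i /boolp.existsNP [j /eqP v0K_neq0]].
exists (\row_(k < d) cokermx S k j); split.
  move=> l; have /matrixP/(_ l j) := mulmx_coker S.
  by rewrite !mxE => <-; apply: eq_bigr => k _; rewrite !mxE.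
rewrite (ord1 i) !mxE in v0K_neq0.
by rewrite /dot; under eq_bigr do rewrite mxE.
Qed.

Lemma notin_span_orthogonal_tilt n (v0 : V) (v : 'I_n -> V) :
  ~ (exists c : 'I_n -> R, v0 = \sum_(i < n) c i *: v i) ->
  exists a : V, (forall i, dot (v i) a = 0) /\ 0 < dot a (v0 - a).
Proof.
move=> /notin_span_orthogonal [w [v_orth_w s_neq0]].
set s := dot v0 w in s_neq0; pose W := sqnorm w + 1.
have W_gt0 : 0 < W by rewrite ltr_wpDl ?sqnorm_ge0.
exists ((s / W) *: w); split=> [i|]; first by rewrite dotZr v_orth_w mulr0.
have -> : dot ((s / W) *: w) (v0 - (s / W) *: w) = (s / W) ^+ 2.
  rewrite dotZl dotC dotBl !dotZl -sqnorm_dot -/s.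
  have -> : sqnorm w = W - 1 by rewrite addrK.
  by field; rewrite gt_eqF.
by rewrite lt0r sqr_ge0 andbT sqrf_eq0 mulf_neq0 // invr_eq0 gt_eqF.
Qed.

End DotProduct.

Arguments polyfun_sqnorm {R d}.

Section ParetoCriteria.
Variables (R : realType) (d n : nat) (f : 'I_n -> 'rV[R]_d -> R).

Lemma pareto_optimal_weighted_strict_min (b : 'I_n -> R) x :
  (forall i, 0 <= b i) ->
  (forall x', x' != x -> \sum_(i < n) b i * f i x < \sum_(i < n) b i * f i x') ->
  pareto_optimal f x.
Proof.
move=> b_ge0 x_min x' [i fi_lt].
case: (boolP [exists j, f j x < f j x']) => [/existsP//|/existsPn no_worse].
have x'_neq_x : x' != x by apply: contraTneq fi_lt => ->; rewrite ltxx.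
have := x_min x' x'_neq_x; rewrite ltNge => /negP[].
by apply: ler_sum => j _; rewrite ler_wpM2l // leNgt no_worse.
Qed.

Lemma preference_optimal_of_descent (f0 : 'rV[R]_d -> R) x : (0 < n)%N ->
  pareto_optimal f x ->
  (forall x', f0 x' < f0 x -> exists y, forall j, f j y < f j x') ->
  preference_optimal f0 f x.
Proof.
move=> n_gt0 x_pareto descent; split=> // x' x'_pareto.
rewrite leNgt; apply/negP => /descent [y y_better].
have [|j] := x'_pareto y; first by exists (Ordinal n_gt0).
by rewrite ltNge (ltW (y_better j)).
Qed.

End ParetoCriteria.

Lemma convex_comb_sqr (R : comPzRingType) (t x y : R) :
  (t * x + (1 - t) * y) ^+ 2
  = t * x ^+ 2 + (1 - t) * y ^+ 2 - t * (1 - t) * (x - y) ^+ 2.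
Proof. ring. Qed.

Lemma sqnorm_convex_comb (R : realType) (d : nat) (t : R) (x y : 'rV[R]_d) :
  sqnorm (t *: x + (1 - t) *: y)
  = t * sqnorm x + (1 - t) * sqnorm y - t * (1 - t) * sqnorm (x - y).
Proof.
rewrite /sqnorm !mulr_sumr -big_split -sumrB.
by apply: eq_bigr => k _; rewrite !mxE convex_comb_sqr.
Qed.

Section TiltedObjectives.
Variables (R : realType) (d : nat) (a p : 'rV[R]_d).
Local Notation V := 'rV[R]_d.
Hypothesis tilt_gt0 : 0 < dot a p.

Definition tilted_quad (x : V) : R := sqnorm x / 2 + dot p x ^+ 2 / (2 * dot a p).

Lemma tilted_quad0 : tilted_quad 0 = 0.
Proof. by rewrite /tilted_quad sqnorm_dot !dot0r expr0n /= !mul0r addr0. Qed.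

Lemma tilted_quad_gt0 x : x != 0 -> 0 < tilted_quad x.
Proof.
move=> x_neq0; rewrite ltr_wpDr ?divr_gt0 ?sqnorm_gt0 //.
by rewrite divr_ge0 ?sqr_ge0 // mulr_ge0 // ltW.
Qed.

Lemma tilted_quadE :
  tilted_quad = fun x => sqnorm x * 2^-1 + dot p x * dot p x * (2 * dot a p)^-1.
Proof. by apply/funext => x; rewrite /tilted_quad expr2. Qed.

Lemma polyfun_tilted_quad : polyfun tilted_quad.
Proof.
rewrite tilted_quadE; apply: polyfun_add; apply: polyfun_mul;
  try exact: polyfun_cst; first exact: polyfun_sqnorm.
by apply: polyfun_mul; apply: polyfun_dotl.
Qed.

Lemma derive_tilted_quad x u :
  derive tilted_quad x u = dot x u + dot p x * dot p u / dot a p.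
Proof.
have dot_sqr : polyfun (fun x => dot p x * dot p x).
  by apply: polyfun_mul; apply: polyfun_dotl.
rewrite tilted_quadE derive_polyfunD; last 2 first.
- exact: polyfun_mul polyfun_sqnorm (polyfun_cst _).
- exact: polyfun_mul dot_sqr (polyfun_cst _).
rewrite !derive_polyfunM ?derive_cst_fun ?derive_sqnorm ?derive_dotl //;
  try exact: polyfun_dotl; try exact: polyfun_cst; try exact: polyfun_sqnorm.
by field; rewrite gt_eqF.
Qed.

Definition objective (u x : V) : R := dot u x + tilted_quad x.

Lemma polyfun_objective u : polyfun (objective u).
Proof. exact: polyfun_add (polyfun_dotl u) polyfun_tilted_quad. Qed.

Lemma grad_objective0 u : grad (objective u) 0 = u.
Proof.
apply/rowP => k; rewrite mxE derive_polyfunD ?derive_dotl ?derive_tilted_quad //.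
- by rewrite dot_delta dot0l dot0r !mul0r !addr0.
- exact: polyfun_dotl.
- exact: polyfun_tilted_quad.
Qed.

Lemma objective_strongly_convex u : strongly_convex (objective u).
Proof.
exists 1; split=> // x y t t_ge0 t_le1.
pose gap := t * (1 - t) * (dot p x - dot p y) ^+ 2 / (2 * dot a p).
have -> : objective u (t *: x + (1 - t) *: y)
    = t * objective u x + (1 - t) * objective u y
      - 1 / 2 * t * (1 - t) * sqnorm (x - y) - gap.
  rewrite /objective /tilted_quad /gap sqnorm_convex_comb !dotDr !dotZr.
  by rewrite convex_comb_sqr; field; rewrite gt_eqF.
rewrite lerBlDr lerDl /gap divr_ge0 //; last by rewrite mulr_ge0 // ltW.
by rewrite mulr_ge0 ?sqr_ge0 // mulr_ge0 // subr_ge0.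
Qed.

(* The Hessian I + p p^T / <a, p> of every objective maps a to a + p, so that
   moving along a changes all objectives orthogonal to a by the same amount. *)
Lemma objective_shift u x t : dot u a = 0 ->
  objective u (x + t *: a)
  = objective u x + t * dot (a + p) x + t ^+ 2 / 2 * dot a (a + p).
Proof.
move=> u_orth_a; rewrite /objective /tilted_quad !sqnorm_dot.
rewrite !(dotDr, dotDl, dotZr, dotZl) u_orth_a (dotC x a) (dotC p a).
by field; rewrite gt_eqF.
Qed.

Lemma objective_pareto_optimal0 n (v : 'I_n -> V) (b : 'I_n -> R) :
  in_simplex b -> \sum_(i < n) b i *: v i = 0 ->
  pareto_optimal (fun i => objective (v i)) 0.
Proof.
move=> [b_ge0 b_sum1] bv0.
apply: (pareto_optimal_weighted_strict_min b_ge0) => x x_neq0.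
have weighted y : \sum_(i < n) b i * objective (v i) y = tilted_quad y.
  rewrite /objective; under eq_bigr do rewrite mulrDr.
  by rewrite big_split /= -mulr_suml b_sum1 mul1r -dot_suml bv0 dot0l add0r.
by rewrite !weighted tilted_quad0 tilted_quad_gt0.
Qed.

Lemma objective_preference_optimal0 n (v : 'I_n -> V) (b : 'I_n -> R) :
  (0 < n)%N -> (forall i, dot (v i) a = 0) ->
  in_simplex b -> \sum_(i < n) b i *: v i = 0 ->
  preference_optimal (dot (a + p)) (fun i => objective (v i)) 0.
Proof.
move=> n_gt0 v_orth_a b_simplex bv0.
have zero_pareto := objective_pareto_optimal0 b_simplex bv0.
apply: preference_optimal_of_descent zero_pareto _ => // x'.
rewrite dot0r; set e := dot (a + p) x' => e_lt0.
set K := dot a (a + p).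
have K_gt0 : 0 < K by rewrite /K dotDr -sqnorm_dot ltr_wpDl ?sqnorm_ge0.
exists (x' + (- e / K) *: a) => j; rewrite objective_shift // -/e -/K -addrA.
have -> : - e / K * e + (- e / K) ^+ 2 / 2 * K = - (e ^+ 2 / (2 * K)).
  by field; rewrite gt_eqF.
have e2_gt0 : 0 < e ^+ 2 by rewrite exprn_even_gt0 //= (lt_eqF e_lt0).
by rewrite gtrDl oppr_lt0 divr_gt0 // mulr_gt0.
Qed.

End TiltedObjectives.

Theorem proposition3 (R : realType) (n d : nat) (hn : (1 < n)%N) (hnd : (n <= d)%N)
  (Stationary : 'rV[R]_d -> ('I_n -> 'rV[R]_d) -> bool)
  (Hnec : forall (f0 : 'rV[R]_d -> R) (f : 'I_n -> 'rV[R]_d -> R) (x : 'rV[R]_d),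
     smooth f0 -> (forall i, smooth (f i)) -> (forall i, strongly_convex (f i)) ->
     preference_optimal f0 f x ->
     Stationary (grad f0 x) (fun i => grad (f i) x))
  (v0 : 'rV[R]_d) (v : 'I_n -> 'rV[R]_d) :
  preference_generic v0 v -> Stationary v0 v.
Proof.
move=> [[b [b_simplex [bv0 _]]] v0_notin_span].
have [a [v_orth_a tilt_gt0]] := notin_span_orthogonal_tilt v0_notin_span.
set p := v0 - a in tilt_gt0.
have -> : v = fun i => grad (objective a p (v i)) 0.
  by apply/funext => i; rewrite (grad_objective0 tilt_gt0).
have -> : v0 = grad (dot (a + p)) 0 by rewrite grad_dotl addrC subrK.
apply: Hnec => [|i|i|].
- exact/polyfun_smooth/polyfun_dotl.
- exact/polyfun_smooth/polyfun_objective.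
- exact: objective_strongly_convex tilt_gt0 _.
- exact: (objective_preference_optimal0 tilt_gt0 (ltnW hn) v_orth_a b_simplex bv0).
Qed.
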